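(* Let $\mu\in\mathcal P_c^*(\mathbb R^2)$. Then there exists a constant $c>0$ such that $\operatorname{std}(\widehat{\mathcal R}_\theta[\mu])\ge c$ for all $\theta\in\mathbb S_1$.
   Context: $\mathbb S_1=\{x\in\mathbb R^2:\|x\|=1\}$; $\mathcal R_\theta[\mu]=(\langle\cdot,\theta\rangle)_\#\mu$. Fix a reference Borel probability measure $\rho$ on $\mathbb R$ without atoms. For a probability measure $\nu$ on $\mathbb R$ with $F_\nu(t)=\nu((-\infty,t])$, $F_\nu^{[-1]}(t)=\inf\{s:F_\nu(s)>t\}$ and the CDT is $\hat\nu=F_\nu^{[-1]}\circ F_\rho$; $\widehat{\mathcal R}_\theta[\mu]$ is the CDT of $\mathcal R_\theta[\mu]$. For $g\in L^2_\rho(\mathbb R)$, $\operatorname{mean}(g)=\int g\,\mathrm d\rho$, $\operatorname{std}(g)=(\int|g-\operatorname{mean}(g)|^2\mathrm d\rho)^{1/2}$. $\mathcal P_c^*(\mathbb R^2)$ is the set of compactly supported Borel probability measures on $\mathbb R^2$ whose support has affine hull of dimension $>1$. *)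

From HB Require Import structures.
From mathcomp Require Import all_boot all_order all_algebra.
From mathcomp Require Import all_classical all_reals all_analysis.
Set Implicit Arguments. Unset Strict Implicit. Unset Printing Implicit Defensive.
Import Order.TTheory GRing.Theory Num.Theory.
Import numFieldNormedType.Exports.
Local Open Scope classical_set_scope.
Local Open Scope ring_scope.

Section defs.
Context (R : realType).

Definition S1 : set (R * R) := [set th | th.1 ^+ 2 + th.2 ^+ 2 = 1].

Definition proj (th : R * R) : R * R -> R := fun x => x.1 * th.1 + x.2 * th.2.

Definition radon (mu : set (R * R) -> \bar R) (th : R * R) : set R -> \bar R :=
  pushforward mu (proj th).

Definition cdf (nu : set R -> \bar R) (t : R) : R := fine (nu [set` `]-oo, t]]).

Definition ginv (F : R -> R) (t : R) : R := inf [set s | t < F s].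

Definition cdt (rho : set R -> \bar R) (nu : set R -> \bar R) : R -> R :=
  ginv (cdf nu) \o cdf rho.

Definition radon_cdt (rho : set R -> \bar R) (mu : set (R * R) -> \bar R)
  (th : R * R) : R -> R := cdt rho (radon mu th).

Definition mean (rho : {measure set R -> \bar R}) (g : R -> R) : R :=
  fine (\int[rho]_x (g x)%:E).
Definition std (rho : {measure set R -> \bar R}) (g : R -> R) : R :=
  Num.sqrt (fine (\int[rho]_x (((g x - mean rho g) ^+ 2)%:E))).

Definition support (mu : set (R * R) -> \bar R) : set (R * R) :=
  [set x | forall r : R, 0 < r -> (0 < mu (ball x r))%E].

Definition is_line (L : set (R * R)) : Prop :=
  exists a b c : R, (a != 0 \/ b != 0) /\ L = [set x | a * x.1 + b * x.2 = c].

(* affine hull of S has dimension > 1 (i.e. = 2): S lies in no affine line *)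
Definition affdim_gt1 (S : set (R * R)) : Prop :=
  ~ exists L, is_line L /\ S `<=` L.

Definition Pc_star (mu : set (R * R) -> \bar R) : Prop :=
  compact (support mu) /\ affdim_gt1 (support mu).

Definition no_atoms (rho : set R -> \bar R) : Prop := forall t : R, rho [set t] = 0%E.

End defs.

(* The support of mu lies in no line, so it contains three affinely independent
   points; by Cramer's rule there is eta > 0 such that in every direction th two of
   them, u and v, have projections at least eta apart.  The balls of radius eta/8
   around the three points have mass at least some q > 0, so the cdf of the projected
   measure is at least q at proj u + eta/4 and at most 1 - q at proj v - eta/4.  Hence
   the CDT is at most proj u + eta/4 where F_rho < q, and at least proj v - eta/4 where
   1 - q < F_rho < 1.  As rho has no atoms, F_rho takes every value in ]0, 1[, so these
   two level sets contain intervals of rho-mass at least some p > 0 independent of th.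
   Whatever its mean, the CDT is eta/4 away from it on one of them, so
   std >= (eta/4) sqrt p; the variance is finite because the compact support makes the
   CDT bounded. *)

From Pilot Require Import Defs.
From HB Require Import structures.
From mathcomp Require Import all_boot all_order all_algebra.
From mathcomp Require Import all_classical all_reals all_analysis.
From mathcomp Require Import measurable_realfun ring lra.
Import Order.TTheory GRing.Theory Num.Theory.
Import numFieldNormedType.Exports.
Local Open Scope classical_set_scope.
Local Open Scope ring_scope.

Local Notation cdf := Defs.cdf.
Local Notation proj := Defs.proj.
Local Notation support := Defs.support.

Section monotone_measure.
Context {d : measure_display} {T : measurableType d} {R : realType}.
Variable mu : {measure set T -> \bar R}.
Local Open Scope ereal_scope.

Lemma nondecreasing_mu_gt (A : (set T)^nat) x : (forall n, measurable (A n)) ->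
  nondecreasing_seq A -> x < mu (\bigcup_n A n) -> exists n, x < mu (A n).
Proof.
move=> mA ndA xA; have mUA : measurable (\bigcup_n A n) by exact: bigcupT_measurable.
have [n _ /(_ n (leqnn n)) ?] := nondecreasing_cvg_mu mA mUA ndA
  (open_nbhs_nbhs (conj (@open_ereal_gt_ereal _ x) xA)).
by exists n.
Qed.

Lemma nonincreasing_mu_lt (A : (set T)^nat) x : (forall n, measurable (A n)) ->
  mu (A 0%N) < +oo -> nonincreasing_seq A -> mu (\bigcap_n A n) < x ->
  exists n, mu (A n) < x.
Proof.
move=> mA A0 niA Ax; have mIA : measurable (\bigcap_n A n) by exact: bigcapT_measurable.
have [n _ /(_ n (leqnn n)) ?] := nonincreasing_cvg_mu A0 mA mIA niA
  (open_nbhs_nbhs (conj (@open_ereal_lt_ereal _ x) Ax)).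
by exists n.
Qed.

End monotone_measure.

Section cdf.
Context {R : realType} (P : probability R R).

Lemma cdfE t : P [set` `]-oo, t]] = (cdf P t)%:E.
Proof. by rewrite /cdf fineK // fin_num_measure. Qed.

Lemma cdf_ge0 t : 0 <= cdf P t.
Proof. by rewrite -lee_fin -cdfE measure_ge0. Qed.

Lemma cdf_le1 t : cdf P t <= 1.
Proof. by rewrite -lee_fin -cdfE probability_le1. Qed.

Lemma le_cdf s t : s <= t -> cdf P s <= cdf P t.
Proof. by move=> st; rewrite -lee_fin -!cdfE le_measure ?inE //; exact: subitvPr. Qed.

Lemma measure_Ioc_cdf s t : s <= t -> P [set` `]s, t]] = (cdf P t - cdf P s)%:E.
Proof.
move=> st; rewrite EFinB -!cdfE.
have -> : P [set` `]-oo, t]] = (P [set` `]-oo, s]] + P [set` `]s, t]])%E.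
  rewrite -measureU //= -?itv_bndbnd_setU ?bnd_simp //.
  by apply/seteqP; split => x //= [/[!in_itv]/= /le_lt_trans h /andP[/h]]; rewrite ltxx.
by rewrite addeAC subee ?add0e ?fin_num_measure.
Qed.

Lemma exists_cdf_gt s : s < 1 -> exists x, s < cdf P x.
Proof.
move=> s1; have [|||n] := nondecreasing_mu_gt P (fun n => [set` `]-oo, n%:R]]) s%:E.
- by move=> n; exact: measurable_itv.
- by move=> m n mn; apply/subsetPset/subset_itvl; rewrite bnd_simp ler_nat.
- suff -> : \bigcup_n [set` `]-oo, n%:R]] = [set: R].
    by change (s%:E < P [set: R])%E; rewrite probability_setT lte_fin.
  apply/seteqP; split => // x _; exists (Num.truncn `|x|).+1 => //=.
  by rewrite in_itv /= (le_trans (ler_norm x)) // ltW // truncnS_gt.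
by exists n%:R; rewrite -lte_fin -cdfE.
Qed.

Lemma exists_cdf_lt s : 0 < s -> exists x, cdf P x < s.
Proof.
move=> s0; have [||||n] := nonincreasing_mu_lt P (fun n => [set` `]-oo, - n%:R]]) s%:E.
- by move=> n; exact: measurable_itv.
- by rewrite -ge0_fin_numE ?fin_num_measure.
- by move=> m n mn; apply/subsetPset/subset_itvl; rewrite bnd_simp lerN2 ler_nat.
- suff -> : \bigcap_n [set` `]-oo, - n%:R]] = set0 :> set R by rewrite measure0 lte_fin.
  apply/seteqP; split => // x /(_ (Num.truncn `|x|).+1 I); rewrite /= in_itv /= => xn.
  have := truncnS_gt `|x|; have := ler_norm (- x); rewrite normrN; lra.
by exists (- n%:R); rewrite -lte_fin -cdfE.
Qed.

Lemma cdf_right_lt y s : cdf P y < s -> exists n : nat, cdf P (y + n.+1%:R^-1) < s.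
Proof.
move=> ys; have [||||n] := nonincreasing_mu_lt P
  (fun n => [set` `]-oo, y + n.+1%:R^-1]]) s%:E.
- by move=> n; exact: measurable_itv.
- by rewrite -ge0_fin_numE ?fin_num_measure.
- move=> m n mn; apply/subsetPset/subset_itvl.
  by rewrite bnd_simp lerD2l lef_pV2 ?posrE // ler_nat.
- by rewrite -(itvNycEbigcap false); move: ys; rewrite -lte_fin -cdfE.
by exists n; rewrite -lte_fin -cdfE.
Qed.

Lemma cdf_left_gt y s : (s%:E < P [set` `]-oo, y[])%E ->
  exists n : nat, s < cdf P (y - n.+1%:R^-1).
Proof.
move=> sy; have [|||n] := nondecreasing_mu_gt P
  (fun n => [set` `]-oo, y - n.+1%:R^-1]]) s%:E.
- by move=> n; exact: measurable_itv.
- move=> m n mn; apply/subsetPset/subset_itvl.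
  by rewrite bnd_simp lerD2l lerN2 lef_pV2 ?posrE // ler_nat.
- suff -> : \bigcup_n [set` `]-oo, y - n.+1%:R^-1]] = [set` `]-oo, y[] by [].
  apply/seteqP; split => x /=.
    case=> n _ /=; rewrite !in_itv /= => /le_lt_trans; apply.
    by rewrite ltrBlDr ltrDl invr_gt0 ltr0Sn.
  rewrite in_itv /= => /ltr_add_invr [n xny]; exists n => //=.
  by rewrite in_itv /= lerBrDr ltW.
by exists n; rewrite -lte_fin -cdfE.
Qed.

Hypothesis atomless : no_atoms P.

Lemma measure_Iio_cdf y : P [set` `]-oo, y[] = (cdf P y)%:E.
Proof.
rewrite -cdfE -(setUitv1 true) // measureU //= ?atomless ?adde0 //.
by apply/seteqP; split => x //= []; rewrite in_itv /= => + xy; rewrite xy ltxx.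
Qed.

Lemma exists_cdf_in s' s : 0 < s' -> s' < s -> s < 1 ->
  exists x, s' < cdf P x < s.
Proof.
move=> s'0 s's s1; pose E := [set x | s <= cdf P x].
have [x1 sx1] := exists_cdf_gt _ s1.
have [x0 x0s] := exists_cdf_lt _ (lt_trans s'0 s's).
have E0 : E !=set0 by exists x1; exact: ltW.
have Ex0 : lbound E x0.
  move=> e Ee; rewrite leNgt; apply/negP => /ltW /le_cdf; rewrite /E /= in Ee; lra.
have Elb : has_lbound E by exists x0.
(* right continuity puts inf E in E; atomlessness makes the cdf left continuous there *)
have sy : s <= cdf P (inf E).
  rewrite leNgt; apply/negP => /cdf_right_lt [n yns].
  have : inf E < inf E + n.+1%:R^-1 by rewrite ltrDl invr_gt0 ltr0Sn.
  by case/(inf_lt E0) => e Ee /ltW /le_cdf; rewrite /E /= in Ee; lra.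
have [n s'yn] : exists n : nat, s' < cdf P (inf E - n.+1%:R^-1).
  by apply: cdf_left_gt; rewrite measure_Iio_cdf lte_fin; lra.
exists (inf E - n.+1%:R^-1); rewrite s'yn /= ltNge; apply/negP => /(ge_inf Elb) yn.
by move: yn; rewrite lerDl oppr_ge0 leNgt invr_gt0 ltr0Sn.
Qed.

Lemma exists_cdf_tail_itvs q : 0 < q < 1 -> exists xa xb xc p, [/\ 0 < p,
  (p%:E <= P [set` `]-oo, xa]])%E, (p%:E <= P [set` `]xb, xc]])%E,
  {in `]-oo, xa], forall x, cdf P x < q} & {in `]xb, xc], forall x, 1 - q < cdf P x < 1}].
Proof.
case/andP => q0 q1.
have [xa /andP[qxa xaq]] : exists x, q / 2 < cdf P x < q by apply: exists_cdf_in; lra.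
have [xb /andP[qxb xb1]] : exists x, 1 - q < cdf P x < 1 - q / 2.
  by apply: exists_cdf_in; lra.
have [xc /andP[xbc xc1]] : exists x, 1 - q / 2 < cdf P x < 1 - q / 4.
  by apply: exists_cdf_in; lra.
have xb_xc : xb <= xc by rewrite leNgt; apply/negP => /ltW /le_cdf; lra.
exists xa, xb, xc, (Num.min (cdf P xa) (cdf P xc - cdf P xb)); split.
- by rewrite lt_min; apply/andP; split; lra.
- by rewrite cdfE lee_fin ge_min lexx.
- by rewrite measure_Ioc_cdf // lee_fin ge_min lexx orbT.
- by move=> x; rewrite in_itv /= => /le_cdf; lra.
- move=> x; rewrite in_itv /= => /andP[/ltW /le_cdf xbx /le_cdf xxc].
  by apply/andP; split; lra.
Qed.

End cdf.

Section generalized_inverse.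
Context {R : realType} {F : R -> R} {K : R}.
Hypothesis F_nondecreasing : forall s t, s <= t -> F s <= F t.
Hypothesis F_le1 : forall s, F s <= 1.
Hypothesis F_eq0 : forall s, s < - K -> F s = 0.
Hypothesis F_eq1 : forall s, K <= s -> F s = 1.

Lemma ginv_lbound t : 0 <= t -> lbound [set s | t < F s] (- K).
Proof. by move=> t0 s /= ts; rewrite leNgt; apply/negP => /F_eq0 Fs; lra. Qed.

Lemma ginv_le t a : 0 <= t -> t < F a -> ginv F t <= a.
Proof. by move=> t0 ta; apply: ge_inf => //; exists (- K); exact: ginv_lbound. Qed.

Lemma ginv_ge t b : F b <= t -> t < 1 -> b <= ginv F t.
Proof.
move=> bt t1; apply: lb_le_inf; first by exists K; rewrite /= F_eq1.
by move=> s /= ts; rewrite leNgt; apply/negP => /ltW /F_nondecreasing; lra.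
Qed.

Lemma normr_ginv_le t : 0 <= K -> 0 <= t -> `|ginv F t| <= K.
Proof.
move=> K0 t0; have [t1|t1] := ltP t 1.
  rewrite ler_norml ginv_le ?F_eq1 // andbT.
  by apply: lb_le_inf; [exists K; rewrite /= F_eq1 | exact: ginv_lbound].
rewrite /ginv (_ : [set s | t < F s] = set0) ?inf0 ?normr0 //.
by apply/seteqP; split => // s /= ts; have := F_le1 s; lra.
Qed.

End generalized_inverse.

Section integral_bounds.
Context {d : measure_display} {T : measurableType d} {R : realType}.
Local Open Scope ereal_scope.

(* No measurability is needed: the integral of a nonnegative function is the
   supremum of the integrals of its simple minorants. *)
Lemma ge0_le_integralT (mu : {measure set T -> \bar R}) (f1 f2 : T -> \bar R) :
  (forall x, 0 <= f1 x) -> (forall x, f1 x <= f2 x) ->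
  \int[mu]_x f1 x <= \int[mu]_x f2 x.
Proof.
move=> f10 f12; have f20 x : 0 <= f2 x by apply: le_trans (f12 x).
rewrite !ge0_integralE //; apply: ereal_sup_le => _ [h /= hf1 <-].
exists h => //= x; apply: le_trans (hf1 x) _.
by rewrite /patch /=; case: ifP.
Qed.

Lemma integral_ge_measure {mu : {measure set T -> \bar R}} {A : set T} {f : T -> R} {k : R} :
  measurable A -> (0 <= k)%R -> (forall x, A x -> k <= f x)%R ->
  (forall x, 0 <= f x)%R -> k%:E * mu A <= \int[mu]_x (f x)%:E.
Proof.
move=> mA k0 kf f0; rewrite -[A in mu A]setIT -integral_indic // -integralZl_indic //.
  apply: ge0_le_integralT => x; first by rewrite lee_fin mulr_ge0.
  by rewrite lee_fin /indic; case: (boolP (x \in A)) => [/set_mem/kf|_]; rewrite ?mulr1 ?mulr0.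
by move=> k0'; move: k0; rewrite leNgt k0'.
Qed.

Lemma integral_le_cst (P : probability T R) (f : T -> R) (C : R) :
  (forall x, 0 <= f x <= C)%R -> \int[P]_x (f x)%:E <= C%:E.
Proof.
move=> fC; apply: le_trans (ge0_le_integralT P _ (cst C%:E) _ _) _.
- by move=> x; have /andP[] := fC x.
- by move=> x; have /andP[] := fC x; rewrite lee_fin.
rewrite integral_cst //.
suff -> : (P : {measure set T -> \bar R}) setT = 1 by rewrite mule1.
exact: probability_setT.
Qed.

End integral_bounds.

Section std_lower_bound.
Context {R : realType} {P : probability R R} {g : R -> R} {A B : set R}.
Context {a b d p : R}.
Hypotheses (mA : measurable A) (mB : measurable B).
Hypotheses (pA : (p%:E <= P A)%E) (pB : (p%:E <= P B)%E).
Hypotheses (gA : forall x, A x -> g x <= a) (gB : forall x, B x -> b <= g x).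
Hypotheses (d0 : 0 <= d) (abd : a + d + d <= b).

Lemma integral_sqr_dev_ge c : ((d ^+ 2 * p)%:E <= \int[P]_x ((g x - c) ^+ 2)%:E)%E.
Proof.
have dev_sqr (y : R) : d <= `|y - c| -> d ^+ 2 <= (y - c) ^+ 2.
  by move=> dx; rewrite -[X in _ <= X]real_normK ?num_real // lerXn2r ?nnegrE ?normr_ge0.
have [ac|ca] := lerP (a + b) (c + c).
- apply: (le_trans _ (integral_ge_measure (f := fun x => (g x - c) ^+ 2) mA (sqr_ge0 d) _ _)).
  + by rewrite EFinM lee_wpmul2l // lee_fin sqr_ge0.
  + move=> x /gA gxa; apply: dev_sqr.
    by rewrite distrC ler_normr; apply/orP; left; have := abd; lra.
  + by move=> x; exact: sqr_ge0.
- apply: (le_trans _ (integral_ge_measure (f := fun x => (g x - c) ^+ 2) mB (sqr_ge0 d) _ _)).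
  + by rewrite EFinM lee_wpmul2l // lee_fin sqr_ge0.
  + move=> x /gB bgx; apply: dev_sqr.
    by rewrite ler_normr; apply/orP; left; have := abd; lra.
  + by move=> x; exact: sqr_ge0.
Qed.

Lemma std_ge K : (forall x, `|g x| <= K) -> Num.sqrt (d ^+ 2 * p) <= std P g.
Proof.
move=> gK; rewrite /std; set c := mean P g; set I := integral _ _ _.
have I_le : (I <= ((K + `|c|) ^+ 2)%:E)%E.
  apply: integral_le_cst => x; rewrite sqr_ge0 /= -real_normK ?num_real //.
  rewrite lerXn2r ?nnegrE ?addr_ge0 // ?(le_trans _ (gK x)) //.
  by rewrite (le_trans (ler_normB _ _)) // lerD2r.
have I_fin : I \is a fin_num.
  rewrite ge0_fin_numE ?(le_lt_trans I_le) ?ltry //.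
  by apply: integral_ge0 => x _; rewrite lee_fin sqr_ge0.
by apply: ler_wsqrtr; rewrite -lee_fin fineK //; exact: integral_sqr_dev_ge.
Qed.

End std_lower_bound.

Section plane.
Context {R : realType}.

Lemma measurable_ball2 (z : R * R) r : measurable (ball z r).
Proof. exact: measurableX (measurable_ball _ _) (measurable_ball _ _). Qed.

Definition grid_itv (n : nat) (i : int) : set R :=
  [set` `[i%:~R / n.+1%:R, (i + 1)%:~R / n.+1%:R[].

Lemma grid_itv_floor n x : grid_itv n (Num.floor (x * n.+1%:R)) x.
Proof.
have /andP[lex ltx] := floor_itv (x * n.+1%:R).
by rewrite /grid_itv /= in_itv /= ler_pdivrMr ?ltr0Sn // ltr_pdivlMr ?ltr0Sn // lex ltx.
Qed.

Lemma grid_itv_dist n i x y : grid_itv n i x -> grid_itv n i y -> `|x - y| < n.+1%:R^-1.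
Proof.
rewrite /grid_itv /= !in_itv /= intrD mulrDl div1r.
set a := i%:~R / _; set e := n.+1%:R^-1; move: a e => a e /andP[? ?] /andP[? ?].
by rewrite ltr_norml; apply/andP; split; lra.
Qed.

Definition cell n i j : set (R * R) := grid_itv n i `*` grid_itv n j.

Lemma measurable_cell n i j : measurable (cell n i j).
Proof. exact: measurableX (measurable_itv _) (measurable_itv _). Qed.

Section null_outside_support.
Context (mu : {measure set (R * R) -> \bar R}).

(* an enumeration of the mu-null grid cells, padded with empty sets *)
Definition null_cell (k : nat) : set (R * R) :=
  if unpickle k is Some (n, i, j) then
    if mu (cell n i j) == 0%E then cell n i j else set0
  else set0.

Lemma measurable_null_cell k : measurable (null_cell k).
Proof.
rewrite /null_cell; case: (unpickle k) => [[[n i] j]|] //.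
by case: ifP => // _; exact: measurable_cell.
Qed.

Lemma measure_null_cell k : mu (null_cell k) = 0%E.
Proof.
rewrite /null_cell; case: (unpickle k) => [[[n i] j]|]; last exact: measure0.
by case: ifPn => [/eqP //|_]; exact: measure0.
Qed.

Lemma compl_support_sub_null_cells : ~` support mu `<=` \bigcup_k null_cell k.
Proof.
move=> z /existsNP [r /not_implyP [r0 /negP]]; rewrite -leNgt => mu_ball.
have [n nr] : exists n : nat, n.+1%:R^-1 < r.
  by have [n] := ltr_add_invr r0; rewrite add0r; exists n.
pose i := Num.floor (z.1 * n.+1%:R); pose j := Num.floor (z.2 * n.+1%:R).
have cell_ball : cell n i j `<=` ball z r.
  move=> x [/= xi xj]; split; rewrite /ball /= distrC; apply: lt_trans nr.
    exact: grid_itv_dist xi (grid_itv_floor _ _).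
  exact: grid_itv_dist xj (grid_itv_floor _ _).
have mu_cell : mu (cell n i j) = 0%E.
  apply/eqP; rewrite eq_le measure_ge0 andbT (le_trans _ mu_ball) //.
  by apply: le_measure; rewrite ?inE; [exact: measurable_cell|exact: measurable_ball2|].
exists (pickle (n, i, j)) => //; rewrite /null_cell pickleK mu_cell eqxx.
by split; exact: grid_itv_floor.
Qed.

Lemma measure0_outside_support (A : set (R * R)) : measurable A ->
  A `<=` ~` support mu -> mu A = 0%E.
Proof.
move=> mA /subset_trans /(_ compl_support_sub_null_cells) Acells.
apply/eqP; rewrite eq_le measure_ge0 andbT.
apply: le_trans (measure_sigma_subadditive _ measurable_null_cell mA Acells) _.
by rewrite eseries0 // => k _ _; exact: measure_null_cell.
Qed.

End null_outside_support.

End plane.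

Section geometry.
Context {R : realType}.
Implicit Types (th u v x z : R * R).

Definition det2 u v : R := u.1 * v.2 - u.2 * v.1.

Lemma S1_normr_le1 {th} : S1 th -> `|th.1| <= 1 /\ `|th.2| <= 1.
Proof.
rewrite /S1 /= => th1.
have h1 : th.1 ^+ 2 <= 1 by rewrite -th1 lerDl sqr_ge0.
have h2 : th.2 ^+ 2 <= 1 by rewrite -th1 lerDr sqr_ge0.
by split; rewrite -(expr_le1 (n := 2)) // ?normr_ge0 // real_normK ?num_real.
Qed.

Lemma S1_normr_sum_ge1 {th} : S1 th -> 1 <= `|th.1| + `|th.2|.
Proof.
move=> th1; have [t1 t2] := S1_normr_le1 th1; move: th1; rewrite /S1 /=.
rewrite -(real_normK (num_real th.1)) -(real_normK (num_real th.2)) => <-.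
by apply: lerD; rewrite expr2 ler_piMl ?normr_ge0.
Qed.

Lemma projB th x z : proj th x - proj th z = proj th (x - z).
Proof. by rewrite /proj /=; ring. Qed.

Lemma compact_normr_sum_bound {S : set (R * R)} : compact S ->
  exists2 M : R, 0 <= M & forall x, S x -> `|x.1| + `|x.2| <= M.
Proof.
case/compact_bounded => M0 [_ /(_ (`|M0| + 1))]; set N := `|M0| + 1 => SN.
have N0 : 0 <= N by rewrite addr_ge0.
exists (N + N) => [|x Sx]; first exact: addr_ge0.
have := SN (le_lt_trans (ler_norm M0) (ltr_pwDr ltr01 (lexx _))) x Sx.
by rewrite /= prod_normE ge_max => /andP[x1 x2]; exact: lerD.
Qed.

Lemma normr_proj_le {th x} : S1 th -> `|proj th x| <= `|x.1| + `|x.2|.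
Proof.
case/S1_normr_le1 => t1 t2; rewrite /proj (le_trans (ler_normD _ _)) // !normrM.
by apply: lerD; rewrite ler_piMr ?normr_ge0.
Qed.

Lemma proj_ball {th z r x} : S1 th -> ball z r x -> `|proj th x - proj th z| < r + r.
Proof.
move=> th1 [/= zx1 zx2]; rewrite projB (le_lt_trans (normr_proj_le th1)) //.
by apply: ltrD; rewrite distrC; [exact: zx1|exact: zx2].
Qed.

Lemma det2_proj_lower_bound u v : det2 u v != 0 ->
  exists2 eta : R, 0 < eta &
    forall th, S1 th -> eta <= `|proj th u| \/ eta <= `|proj th v|.
Proof.
move=> D0; set D := det2 u v; set C := `|u.1| + `|u.2| + `|v.1| + `|v.2|.
have C0 : 0 <= C by rewrite !addr_ge0.
have C1 : 0 < C + 1 by rewrite ltr_wpDl.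
exists (`|D| / (C + 1)) => [|th th1]; first by rewrite divr_gt0 ?normr_gt0.
set eta := `|D| / (C + 1); have etaC : eta * (C + 1) = `|D| by rewrite divfK ?gt_eqF.
set s1 := proj th u; set s2 := proj th v.
have [|lt1] := leP eta `|s1|; [by left|]; have [|lt2] := leP eta `|s2|; [by right|].
exfalso.
(* Cramer's rule: th.1 * D and th.2 * D are combinations of s1 and s2 *)
have t1D : `|th.1| * `|D| <= `|s1| * `|v.2| + `|s2| * `|u.2|.
  rewrite -normrM (_ : th.1 * D = s1 * v.2 - s2 * u.2).
    by rewrite (le_trans (ler_normB _ _)) // !normrM.
  by rewrite /s1 /s2 /proj /D /det2; ring.
have t2D : `|th.2| * `|D| <= `|s2| * `|u.1| + `|s1| * `|v.1|.
  rewrite -normrM (_ : th.2 * D = s2 * u.1 - s1 * v.1).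
    by rewrite (le_trans (ler_normB _ _)) // !normrM.
  by rewrite /s1 /s2 /proj /D /det2; ring.
have Dsum : `|D| <= `|th.1| * `|D| + `|th.2| * `|D|.
  by rewrite -mulrDl ler_peMl ?normr_ge0 ?S1_normr_sum_ge1.
have s1v : `|s1| * (`|v.1| + `|v.2|) <= eta * (`|v.1| + `|v.2|).
  by apply: ler_wpM2r; [rewrite addr_ge0 | exact: ltW].
have s2u : `|s2| * (`|u.1| + `|u.2|) <= eta * (`|u.1| + `|u.2|).
  by apply: ler_wpM2r; [rewrite addr_ge0 | exact: ltW].
have eta0 : 0 < eta by rewrite divr_gt0 ?normr_gt0.
rewrite /C in etaC; lra.
Qed.

Lemma triangle_proj_gap {x0 x1 x2} : det2 (x1 - x0) (x2 - x0) != 0 ->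
  exists2 eta : R, 0 < eta & forall th, S1 th -> exists u v,
    [/\ u \in [:: x0; x1; x2], v \in [:: x0; x1; x2] & eta <= proj th v - proj th u].
Proof.
move=> /det2_proj_lower_bound [eta eta0 gap]; exists eta => // th /gap.
have ordered x y : x \in [:: x0; x1; x2] -> y \in [:: x0; x1; x2] ->
    eta <= `|proj th (y - x)| -> exists u v,
    [/\ u \in [:: x0; x1; x2], v \in [:: x0; x1; x2] & eta <= proj th v - proj th u].
  move=> xT yT; rewrite -projB.
  have [/ger0_norm ->|/ltr0_norm ->] := lerP 0 (proj th y - proj th x); first by exists x, y.
  by rewrite opprB; exists y, x.
by case=> /ordered; apply; rewrite !inE eqxx ?orbT.
Qed.

Lemma affdim_gt1_triangle {S : set (R * R)} : affdim_gt1 S ->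
  exists x0 x1 x2, [/\ S x0, S x1, S x2 & det2 (x1 - x0) (x2 - x0) != 0].
Proof.
move=> Saff; have off_line a b c : a != 0 \/ b != 0 ->
    exists2 x, S x & a * x.1 + b * x.2 != c.
  move=> ab; apply: contrapT => /forall2NP on_line; apply: Saff.
  exists [set x | a * x.1 + b * x.2 = c]; split; first by exists a, b, c.
  by move=> x Sx; case: (on_line x) => // /negP; rewrite negbK => /eqP.
have [x0 Sx0 _] := off_line 1 0 0 (or_introl (oner_neq0 R)).
have [x1 Sx1] := off_line 1 0 x0.1 (or_introl (oner_neq0 R)).
rewrite mul1r mul0r addr0 => x10.
have x01 : x0.1 - x1.1 != 0 by rewrite subr_eq0 eq_sym.
have [x2 Sx2 x2_off] := off_line (x1.2 - x0.2) (x0.1 - x1.1)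
  ((x1.2 - x0.2) * x0.1 + (x0.1 - x1.1) * x0.2) (or_intror x01).
exists x0, x1, x2; split => //; apply: contra x2_off; rewrite /det2 /=.
by move=> /eqP D0; apply/eqP; lra.
Qed.

End geometry.

Section radon.
Context {R : realType} {mu : probability (R * R)%type R}.

Lemma measurable_proj (th : R * R) : measurable_fun setT (proj th).
Proof.
apply: measurable_funD.
  by apply: measurable_funM => //; exact: measurable_fst.
by apply: measurable_funM => //; exact: measurable_snd.
Qed.

(* makes [radon mu th] the probability [distribution mu (proj th)] *)
HB.instance Definition _ (th : R * R) :=
  isMeasurableFun.Build _ _ _ _ (proj th) (measurable_proj th).

Lemma exists_ball_mass_lbound (s : seq (R * R)) r : 0 < r ->
  (forall z, z \in s -> support mu z) ->
  exists q : R, 0 < q < 1 /\ forall z, z \in s -> (q%:E <= mu (ball z r))%E.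
Proof.
move=> r0; elim: s => [|z s IHs] supp_s.
  by exists (1 / 2); split => //; lra.
have [|q [/andP[q0 q1] qs]] := IHs; first by move=> y ys; apply: supp_s; rewrite inE ys orbT.
have zr : (0 < mu (ball z r))%E by apply: supp_s; rewrite ?inE ?eqxx.
have mu_ball : mu (ball z r) = (fine (mu (ball z r)))%:E.
  by rewrite fineK // fin_num_measure //; exact: measurable_ball2.
exists (Num.min q (fine (mu (ball z r)))); split.
  have : 0 < fine (mu (ball z r)) by rewrite -lte_fin -mu_ball.
  by rewrite lt_min gt_min q0 q1 => ->.
move=> y; rewrite inE => /orP[/eqP ->|ys]; first by rewrite mu_ball lee_fin ge_min lexx orbT.
by rewrite (le_trans _ (qs y ys)) // lee_fin ge_min lexx.
Qed.

Section direction.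
Context {rho : probability R R} {M : R} {th : R * R}.
Hypotheses (suppM : forall x, support mu x -> `|x.1| + `|x.2| <= M) (th1 : S1 th).
Local Notation radon_prob := (distribution mu (proj th)).
Local Notation G := (cdf (radon mu th)).

Lemma measurable_proj_preimage {A : set R} : measurable A -> measurable (proj th @^-1` A).
Proof. by move=> mA; rewrite -[_ @^-1` _]setTI; exact: measurable_proj. Qed.

Lemma radon_cdfE s : mu (proj th @^-1` [set` `]-oo, s]]) = (G s)%:E.
Proof. exact: (cdfE radon_prob). Qed.

Lemma proj_support_ge x : support mu x -> - M <= proj th x.
Proof.
move=> /suppM /(le_trans (normr_proj_le th1)).
by rewrite ler_norml => /andP[].
Qed.

Lemma proj_support_le x : support mu x -> proj th x <= M.
Proof.
move=> /suppM /(le_trans (normr_proj_le th1)).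
by rewrite ler_norml => /andP[].
Qed.

Lemma radon_cdf_eq0 s : s < - M -> G s = 0.
Proof.
move=> sM; apply/EFin_inj; rewrite -radon_cdfE.
apply: measure0_outside_support; first exact: measurable_proj_preimage (measurable_itv _).
move=> x /=; rewrite in_itv /= => xs /proj_support_ge; lra.
Qed.

Lemma radon_cdf_eq1 s : M <= s -> G s = 1.
Proof.
move=> Ms; have mA := measurable_proj_preimage (measurable_itv `]-oo, s]).
have : mu (~` (proj th @^-1` [set` `]-oo, s]])) = 0%E.
  apply: measure0_outside_support; first exact: measurableC.
  move=> x /= xs /proj_support_le xM; apply: xs; rewrite in_itv /=; lra.
by rewrite probability_setC // radon_cdfE => -[] /eqP; rewrite subr_eq0 => /eqP <-.
Qed.

Lemma ball_le_radon_cdf z r : (mu (ball z r) <= (G (proj th z + (r + r)))%:E)%E.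
Proof.
rewrite -radon_cdfE le_measure ?inE //; first exact: measurable_ball2.
  exact: measurable_proj_preimage (measurable_itv _).
move=> x /(proj_ball th1); rewrite /= in_itv /= ltr_norml => /andP[_]; lra.
Qed.

Lemma ball_le_radon_ccdf z r : (mu (ball z r) <= (1 - G (proj th z - (r + r)))%:E)%E.
Proof.
have mA := measurable_proj_preimage (measurable_itv `]-oo, proj th z - (r + r)]).
rewrite EFinB -radon_cdfE -probability_setC // le_measure ?inE //; last 2 first.
- exact: measurableC.
- move=> x /(proj_ball th1); rewrite /= in_itv /= ltr_norml => /andP[+ _] xA; lra.
exact: measurable_ball2.
Qed.

Local Notation g := (radon_cdt rho mu th).

Lemma radon_cdt_le {z r q x} : (q%:E <= mu (ball z r))%E -> cdf rho x < q ->
  g x <= proj th z + (r + r).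
Proof.
move=> q_ball xq; apply: (ginv_le radon_cdf_eq0); first exact: cdf_ge0.
by rewrite (lt_le_trans xq) // -lee_fin (le_trans q_ball) // ball_le_radon_cdf.
Qed.

Lemma radon_cdt_ge {z r q x} : (q%:E <= mu (ball z r))%E -> 1 - q < cdf rho x < 1 ->
  proj th z - (r + r) <= g x.
Proof.
move=> q_ball /andP[qx x1]; apply: (ginv_ge (le_cdf radon_prob) radon_cdf_eq1) => //.
have := le_trans q_ball (ball_le_radon_ccdf z r); rewrite lee_fin; lra.
Qed.

Lemma normr_radon_cdt_le x : 0 <= M -> `|g x| <= M.
Proof.
move=> M0; apply: (normr_ginv_le (cdf_le1 radon_prob) radon_cdf_eq0 radon_cdf_eq1) => //.
exact: cdf_ge0.
Qed.

End direction.

End radon.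

Theorem proposition4 (R : realType) (rho : probability R R)
    (mu : probability (R * R)%type R) :
  no_atoms rho -> Pc_star mu ->
  exists c : R, 0 < c /\
    forall th : R * R, S1 th -> c <= std rho (radon_cdt rho mu th).
Proof.
move=> atomless [supp_cpt supp_aff].
have [M M0 suppM] := compact_normr_sum_bound supp_cpt.
have [x0 [x1 [x2 [Sx0 Sx1 Sx2 D]]]] := affdim_gt1_triangle supp_aff.
have [eta eta0 gap] := triangle_proj_gap D.
pose r := eta / 8.
have [q [q01 q_ball]] : exists q : R, 0 < q < 1 /\
    forall z, z \in [:: x0; x1; x2] -> (q%:E <= mu (ball z r))%E.
  apply: exists_ball_mass_lbound; first by rewrite divr_gt0.
  by move=> z; rewrite !inE => /or3P[] /eqP ->.
have [xa [xb [xc [p [p0 pA pB qA qB]]]]] := exists_cdf_tail_itvs rho atomless _ q01.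
exists (Num.sqrt ((r + r) ^+ 2 * p)); split => [|th th1].
  by rewrite sqrtr_gt0 mulr_gt0 // exprn_gt0 // addr_gt0 // divr_gt0.
have [u [v [u3 v3 uv]]] := gap th th1.
have g_bound := normr_radon_cdt_le (rho := rho) suppM th1 ^~ M0.
apply: (std_ge (a := proj th u + (r + r)) (b := proj th v - (r + r))
  (measurable_itv _) (measurable_itv _) pA pB _ _ _ _ _ g_bound).
- by move=> x /qA /(radon_cdt_le suppM th1 (q_ball u u3)).
- by move=> x /qB /(radon_cdt_ge suppM th1 (q_ball v v3)).
- by rewrite addr_ge0 // ltW // divr_gt0.
- by rewrite /r; lra.
Qed.
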